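(* Let $M\in\Lambda_{\mathrm{NF}}$ have blueprint $\alpha$, and suppose $\alpha\rhd^{b^m_0}_{\omega_m}\cdots\rhd^{b^m_{p_m}}_{\omega_m}\ \cdots\ \rhd^{b^1_0}_{\omega_1}\cdots\rhd^{b^1_{p_1}}_{\omega_1}\emptyset_{\mathbb B}$ (through some intermediate blueprints). Then for every strictly increasing sequence of variables $Y=(y_1,\dots,y_m)$ with $\Omega(Y)=(\omega_1,\dots,\omega_m)$, there exists a term $N$ with the same domain, the same blueprint and the same type as $M$ such that $\mathrm{Free}(N)=Y$ and $\{b : N|_b=y_i\}=\{b^i_0,\dots,b^i_{p_i}\}$ for each $i$.
   Context: Formulas are built from atoms with $\to$. Let $\mathcal X$ be a countably infinite set of variables with an injective map $\mathcal O:\mathcal X\to\mathbb N$; $x<y$ iff $\mathcal O(x)<\mathcal O(y)$. Terms are pure $\lambda$-terms over $\mathcal X$, not identified up to $\alpha$-conversion; no two $\lambda$'s bind the same variable and no variable is both free and bound. $\mathrm{Free}(M)$ is the strictly increasing sequence of free variables of $M$. HRM terms: variables; $\lambda x.M$ with $M$ HRM and $x$ the greatest free variable of $M$; $(MN)$ with $M,N$ HRM and every free variable of $M$ $\le$ some free variable of $N$. Fix $\Omega$ from variables to formulas with each $\Omega^{-1}(\phi)$ infinite; $\Omega(y_1,\dots,y_m)=(\Omega(y_1),\dots,\Omega(y_m))$. Typing: $x:\Omega(x)$; $\lambda x.M:\chi\to\psi$ if $x:\chi$, $M:\psi$, $\lambda x.M$ HRM; $(MN):\psi$ if $M:\chi\to\psi$,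 $N:\chi$, $(MN)$ HRM. $\Lambda_{\mathrm{NF}}$ is the set of typed $\beta$-normal terms. Addresses are finite sequences of positive integers with prefix order $\le$, concatenation $\cdot$, empty address $\varepsilon$. Terms are identified with trees: $x$ is $\varepsilon\mapsto x$; $\lambda x.M$ maps $\varepsilon$ to $\lambda x$ with subtree $M$ at $(1)$; $(M_1M_2)$ maps $\varepsilon$ to $@$ with subtrees $M_1,M_2$ at $(1),(2)$; $M|_a$ is the subterm at $a$, $\mathrm{dom}(M)$ its set of addresses. For a partial tree $\pi$, $\pi|_a$ is $c\mapsto\pi(a\cdot c)$. Let $\mathfrak S$ consist of all formulas (arity 0) and symbols $@_\phi$ (arity 2). A blueprint is a finite partial tree with values in $\mathfrak S$ such that if $\alpha(a)=@_\phi$ then $\alpha|_{a\cdot(1)},\alpha|_{a\cdot(2)}$ are non-empty. Notation: $\emptyset_{\mathbb B}$ empty blueprint; $\phi$ denotes $\varepsilon\mapsto\phi$; $@_\phi(\alpha_1,\alpha_2)$ ($\alpha_i$ non-empty) has root $@_\phi$ and $\alpha_i$ at $(i)$; for pairwise incomparable $\bar a=(a_1,\dots,a_k)$, $*_{\bar a}(\alpha_1,\dots,\alpha_k)$ is the blueprint of minimal domain with restriction $\alpha_i$ at $a_i$; $*(\alpha_1,\dots,\alpha_k)=*_{((1),\dots,(k))}(\dots)$. The stable part of $M\in\Lambda_{\mathrm{NF}}$ is the set of $a\in\mathrm{dom}(M)$ with $\mathrm{Free}(M|_a)\subseteq\mathrm{Free}(M)$ and $M|_a$ a variable or an application. The blueprint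 of $M$ maps each $a$ in the stable part to $\psi$ if $M|_a$ is a variable of type $\psi$, and to $@_\psi$ if $M|_a$ is an application of type $\psi$. Extraction $\alpha\rhd^a_\phi\beta$: (1) $\phi\rhd^\varepsilon_\phi\emptyset_{\mathbb B}$; (2) if $\alpha\rhd^a_\phi\beta$ ($\gamma,\alpha$ non-empty) then $@_\psi(\gamma,\alpha)\rhd^{(2)\cdot a}_\phi*(\gamma,\beta)$; (3) if $\alpha\rhd^a_\phi\beta$, $b\ne\varepsilon$, $(b,c_1,\dots,c_k)$ pairwise incomparable, then $*_{(b,c_1,\dots,c_k)}(\alpha,\gamma_1,\dots,\gamma_k)\rhd^{b\cdot a}_\phi*_{(b,c_1,\dots,c_k)}(\beta,\gamma_1,\dots,\gamma_k)$. *)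

From mathcomp Require Import all_boot.
Set Implicit Arguments. Unset Strict Implicit. Unset Printing Implicit Defensive.

Inductive formula := Atom of nat | Imp of formula & formula.

Definition formula_eq_dec (a b : formula) : {a = b} + {a <> b}.
Proof. decide equality; decide equality. Defined.

(** * Raw lambda terms over a type of variables [X] (no alpha-conversion). *)
Inductive term (X : Type) := Var of X | Lam of X & term X | App of term X & term X.
Arguments Var {X}. Arguments Lam {X}. Arguments App {X}.

Fixpoint FV {X : eqType} (M : term X) : seq X :=
  match M with
  | Var x => [:: x]
  | Lam x P => [seq y <- FV P | y != x]
  | App P Q => FV P ++ FV Q
  end.

Fixpoint BV {X : Type} (M : term X) : seq X :=
  match M with
  | Var _ => [::]
  | Lam x P => x :: BV P
  | App P Q => BV P ++ BV Q
  end.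

Definition wf_term {X : eqType} (M : term X) : bool :=
  uniq (BV M) && all (fun x => x \notin BV M) (FV M).

Fixpoint beta_normal {X : Type} (M : term X) : bool :=
  match M with
  | Var _ => true
  | Lam _ P => beta_normal P
  | App P Q => (if P is Lam _ _ then false else true) && beta_normal P && beta_normal Q
  end.

(** HRM terms, w.r.t. the order x < y iff O x < O y. *)
Inductive HRM {X : eqType} (O : X -> nat) : term X -> Prop :=
| hrm_var x : HRM O (Var x)
| hrm_lam x P : HRM O P -> x \in FV P -> (forall y, y \in FV P -> O y <= O x) ->
    HRM O (Lam x P)
| hrm_app P Q : HRM O P -> HRM O Q ->
    (forall y, y \in FV P -> exists2 z, z \in FV Q & O y <= O z) ->
    HRM O (App P Q).

(** Typing (Church style via Omega). *)
Inductive has_type {X : eqType} (O : X -> nat) (Om : X -> formula) :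
    term X -> formula -> Prop :=
| ty_var x : has_type O Om (Var x) (Om x)
| ty_lam x P psi : has_type O Om P psi -> HRM O (Lam x P) ->
    has_type O Om (Lam x P) (Imp (Om x) psi)
| ty_app P Q chi psi : has_type O Om P (Imp chi psi) -> has_type O Om Q chi ->
    HRM O (App P Q) -> has_type O Om (App P Q) psi.

Definition Lambda_NF {X : eqType} (O : X -> nat) (Om : X -> formula) (M : term X) : Prop :=
  wf_term M /\ (exists tau, has_type O Om M tau) /\ beta_normal M.

(** Free(M) = Y : Y is the strictly increasing sequence of free variables of M. *)
Definition free_seq {X : eqType} (O : X -> nat) (M : term X) (Y : seq X) : Prop :=
  sorted (fun x y => O x < O y) Y /\ (forall x, (x \in FV M) = (x \in Y)).

Definition addr := seq nat.
Definition addr_ok (a : addr) : bool := all (fun k => 0 < k) a.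
Definition prefix (a d : addr) : bool := take (size a) d == a.
Definition incomparable (a d : addr) : bool := ~~ prefix a d && ~~ prefix d a.

Fixpoint subterm {X : Type} (M : term X) (a : addr) : option (term X) :=
  match a with
  | [::] => Some M
  | k :: c =>
      match M with
      | Var _ => None
      | Lam _ P => if k == 1 then subterm P c else None
      | App P Q => if k == 1 then subterm P c else if k == 2 then subterm Q c else None
      end
  end.

(** Type of a term, computed (only used on typed terms, where it agrees with
    [has_type], which is deterministic). *)
Fixpoint tyof {X : Type} (Om : X -> formula) (M : term X) : option formula :=
  match M with
  | Var x => Some (Om x)
  | Lam x P => omap (Imp (Om x)) (tyof Om P)
  | App P Q =>
      match tyof Om P, tyof Om Q with
      | Some (Imp chi psi), Some chi' => if formula_eq_dec chi chi' then Some psi else None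
      | _, _ => None
      end
  end.

Inductive symb := SForm of formula | SApp of formula.
Definition blueprint := addr -> option symb.

Definition bp_eq (al be : blueprint) : Prop := forall a, al a = be a.
Definition bp_empty : blueprint := fun _ => None.
Definition bp_single (phi : formula) : blueprint :=
  fun a => if a is [::] then Some (SForm phi) else None.
Definition bp_restr (al : blueprint) (a : addr) : blueprint := fun c => al (a ++ c).
Definition bp_nonempty (al : blueprint) : Prop := exists c, al c <> None.

Definition is_blueprint (al : blueprint) : Prop :=
  (exists s : seq addr, forall a, al a <> None -> a \in s) /\
  (forall a, al a <> None -> addr_ok a) /\
  (forall a psi, al a = Some (SApp psi) ->
     bp_nonempty (bp_restr al (rcons a 1)) /\ bp_nonempty (bp_restr al (rcons a 2))).

Definition bp_app (psi : formula) (al1 al2 : blueprint) : blueprint :=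
  fun a => match a with
           | [::] => Some (SApp psi)
           | k :: c => if k == 1 then al1 c else if k == 2 then al2 c else None
           end.

(** *_{as}(bs): bs_i placed at as_i, minimal domain. *)
Fixpoint star_at (as_ : seq addr) (bs : seq blueprint) (d : addr) : option symb :=
  match as_, bs with
  | a :: as', b :: bs' => if prefix a d then b (drop (size a) d) else star_at as' bs' d
  | _, _ => None
  end.
Definition star (as_ : seq addr) (bs : seq blueprint) : blueprint := star_at as_ bs.

Definition bp_of_term {X : eqType} (Om : X -> formula) (M : term X) : blueprint :=
  fun a =>
    match subterm M a with
    | Some P =>
        if all (fun x => x \in FV M) (FV P) then
          match P with
          | Var x => Some (SForm (Om x))
          | App _ _ => omap SApp (tyof Om P)
          | Lam _ _ => None
          end
        else None
    | None => None
    end.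

(** * Extraction  al |>^a_phi be. Blueprints are identified extensionally
    (rule [ex_ext]). *)
Inductive extr : blueprint -> addr -> formula -> blueprint -> Prop :=
| ex_base phi : extr (bp_single phi) [::] phi bp_empty
| ex_app psi ga al a phi be :
    is_blueprint ga -> bp_nonempty ga -> bp_nonempty al ->
    extr al a phi be ->
    extr (bp_app psi ga al) (2 :: a) phi (star [:: [:: 1]; [:: 2]] [:: ga; be])
| ex_star al a phi be b cs gs :
    extr al a phi be -> b != [::] -> addr_ok b -> all addr_ok cs ->
    size cs = size gs -> pairwise incomparable (b :: cs) ->
    (forall i, i < size gs -> is_blueprint (nth bp_empty gs i)) ->
    extr (star (b :: cs) (al :: gs)) (b ++ a) phi (star (b :: cs) (be :: gs))
| ex_ext al al' a phi be be' :
    extr al a phi be -> bp_eq al al' -> bp_eq be be' -> extr al' a phi be'.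

Inductive extr_chain : blueprint -> seq (addr * formula) -> blueprint -> Prop :=
| ch_nil al : extr_chain al [::] al
| ch_cons al a phi be s ga :
    extr al a phi be -> extr_chain be s ga -> extr_chain al ((a, phi) :: s) ga.

(** Given bs = [b^1; ...; b^m] (b^i = [b^i_0; ...; b^i_{p_i}]) and
    oms = [om_1; ...; om_m], the steps in the order
    b^m_0..b^m_{p_m}, ..., b^1_0..b^1_{p_1}. *)
Definition steps (bs : seq (seq addr)) (oms : seq formula) : seq (addr * formula) :=
  flatten (rev [seq [seq (b, om.2) | b <- om.1] | om <- zip bs oms]).

(* Rename every bound variable [x] of [M] to a fresh variable [sg x] of the
   same type, with [sg] strictly increasing and taking values above all of [Y],
   and replace the free occurrence at address [b] by [y_i] when [b] lies in the
   [i]-th block.  The leaves of the blueprint of [M] are exactly its free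
   occurrences, and a chain of extractions ending in the empty blueprint lists
   each of them exactly once, so the replacement is well defined and preserves
   types, hence the blueprint.  The HRM condition at an application [P Q] whose
   free variables are all free in [M] is the delicate point: extraction only
   descends through right children, so the node [P Q] must have been erased by
   extracting a leaf of [Q] before any leaf of [P] is extracted.  That leaf of
   [Q] lies in a block of larger or equal index, and [Y] is increasing. *)

From mathcomp Require Import all_boot.
From HB Require Import structures.
Set Implicit Arguments. Unset Strict Implicit. Unset Printing Implicit Defensive.

Definition formula_eqb (phi psi : formula) : bool := formula_eq_dec phi psi.

Lemma formula_eqP : Equality.axiom formula_eqb.
Proof. by move=> phi psi; rewrite /formula_eqb; case: formula_eq_dec; constructor. Qed.

HB.instance Definition _ := hasDecEq.Build formula formula_eqP.

Lemma cat_injl (T : Type) (s t1 t2 : seq T) : s ++ t1 = s ++ t2 -> t1 = t2.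
Proof. by elim: s => //= x s IH [] /IH. Qed.

Lemma mem_zip_nth (S T : eqType) (s : seq S) (t : seq T) x0 y0 x y :
  size s = size t -> (x, y) \in zip s t ->
  exists i, [/\ i < size s, x = nth x0 s i & y = nth y0 t i].
Proof.
move=> size_st xy_st; exists (index (x, y) (zip s t)).
have := nth_index (x0, y0) xy_st; rewrite -index_mem size_zip size_st minnn in xy_st.
by rewrite nth_zip // size_st => -[-> ->].
Qed.

Lemma prefix_seqE (a d : addr) : prefix a d = seq.prefix a d.
Proof. by rewrite seq.prefixE. Qed.

Lemma addr_prefixP (a d : addr) : reflect (exists e, d = a ++ e) (prefix a d).
Proof. by rewrite prefix_seqE; apply: prefixP. Qed.

Lemma addr_prefix_cat (a e : addr) : prefix a (a ++ e).
Proof. by rewrite prefix_seqE prefix_prefix. Qed.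

Lemma addr_prefix_refl (a : addr) : prefix a a.
Proof. by rewrite prefix_seqE prefix_refl. Qed.

Lemma addr_prefix_trans (a d e : addr) : prefix a d -> prefix d e -> prefix a e.
Proof. rewrite !prefix_seqE; exact: prefix_trans. Qed.

Lemma prefix_cat_notprefix (d b a : addr) :
  prefix d (b ++ a) -> ~~ prefix b d -> prefix d b.
Proof.
rewrite /prefix take_cat; case: ltnP => // le_bd /eqP <-.
by rewrite take_size_cat ?eqxx.
Qed.

Lemma star_cons_cat (b : addr) cs al gs e : star (b :: cs) (al :: gs) (b ++ e) = al e.
Proof. by rewrite /star /= addr_prefix_cat drop_size_cat. Qed.

Lemma star_cons_notprefix (b : addr) cs al gs d :
  ~~ prefix b d -> star (b :: cs) (al :: gs) d = star cs gs d.
Proof. by move=> /negbTE bd; rewrite /star /= bd. Qed.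

Lemma star_notprefix cs gs d :
  (forall c, c \in cs -> ~~ prefix c d) -> star cs gs d = None.
Proof.
elim: cs gs => [|c cs IH] [|g gs] cd //.
rewrite star_cons_notprefix ?cd ?mem_head //; apply: IH => c' c'cs.
by apply: cd; rewrite in_cons c'cs orbT.
Qed.

Definition extr_inv (al : blueprint) (a : addr) (phi : formula) (be : blueprint) :=
  [/\ al a = Some (SForm phi),
      forall e, e <> [::] -> al (a ++ e) = None,
      forall d k e, a = d ++ k :: e -> al d <> None ->
        k = 2 /\ exists psi, al d = Some (SApp psi),
      forall d, ~~ prefix d a -> be d = al d &
      forall d, prefix d a -> be d = None].

Lemma extr_inv_single phi : extr_inv (bp_single phi) [::] phi bp_empty.
Proof. by split=> // [[]|[|? ?] k e|[]]. Qed.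

Lemma extr_inv_app psi ga al a phi be :
  extr_inv al a phi be ->
  extr_inv (bp_app psi ga al) (2 :: a) phi (star [:: [:: 1]; [:: 2]] [:: ga; be]).
Proof.
case=> leaf below path off on; split.
- by [].
- by move=> e /below.
- case=> [|k0 d] k e /= [<-]; first by split; last exists psi.
  exact: path.
- case=> [|[|[|[|k]]] d] //=; rewrite /star /= /prefix /= ?take0 ?drop0 //.
  by rewrite eqseq_cons eqxx /= => da; rewrite off.
- case=> [|k d]; first by rewrite /star /= /prefix.
  rewrite /prefix /= eqseq_cons => /andP[/eqP <- da].
  by rewrite /star /= /prefix /= take0 drop0 /= on.
Qed.

Section ExtrInvStar.

Variables (al be : blueprint) (a : addr) (phi : formula).
Variables (b : addr) (cs : seq addr) (gs : seq blueprint).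
Hypothesis inv_al : extr_inv al a phi be.
Hypothesis pw : pairwise incomparable (b :: cs).

Let star_al := star (b :: cs) (al :: gs).
Let star_be := star (b :: cs) (be :: gs).

Let strict_ancestor_undef d :
  prefix d b -> ~~ prefix b d -> star_al d = None /\ star_be d = None.
Proof.
move=> db bd; rewrite /star_al /star_be !star_cons_notprefix //.
have cd c : c \in cs -> ~~ prefix c d.
  move=> ccs; apply/negP => cd; move: pw => /= /andP[/allP /(_ c ccs) /andP[_]].
  by rewrite (addr_prefix_trans cd db).
by split; apply: star_notprefix.
Qed.

Lemma extr_inv_star : extr_inv star_al (b ++ a) phi star_be.
Proof.
case: inv_al => leaf below path off on; split.
- by rewrite /star_al star_cons_cat.
- by move=> e e0; rewrite /star_al -catA star_cons_cat below.
- move=> d k e de; case bd: (prefix b d).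
    move: bd de => /addr_prefixP[d' ->]; rewrite -catA => /cat_injl ad'.
    by rewrite /star_al star_cons_cat; apply: path ad'.
  have db : prefix d b.
    apply: (prefix_cat_notprefix (a := a) _ (negbT bd)).
    by apply/addr_prefixP; exists (k :: e).
  by case: (strict_ancestor_undef db (negbT bd)).
- move=> d; case bd: (prefix b d); last by rewrite /star_al /star_be !star_cons_notprefix ?bd.
  move: bd => /addr_prefixP[d' ->] nd; rewrite /star_al /star_be !star_cons_cat off //.
  by apply: contra nd => /addr_prefixP[e ->]; rewrite catA addr_prefix_cat.
- move=> d da; case bd: (prefix b d).
    move: bd da => /addr_prefixP[d' ->] /addr_prefixP[e].
    rewrite -catA => /cat_injl ad'.
    by rewrite /star_be star_cons_cat on // ad' addr_prefix_cat.
  by case: (strict_ancestor_undef (prefix_cat_notprefix da (negbT bd)) (negbT bd)).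
Qed.

End ExtrInvStar.

Lemma extr_inv_ext al al' a phi be be' :
  extr_inv al a phi be -> bp_eq al al' -> bp_eq be be' -> extr_inv al' a phi be'.
Proof.
move=> [leaf below path off on] eal ebe; split.
- by rewrite -eal.
- by move=> e /below; rewrite eal.
- by move=> d k e ad; rewrite -eal; apply: path ad.
- by move=> d da; rewrite -eal -ebe off.
- by move=> d da; rewrite -ebe on.
Qed.

Lemma extrP al a phi be : extr al a phi be -> extr_inv al a phi be.
Proof.
elim=> {al a phi be}.
- exact: extr_inv_single.
- by move=> *; apply: extr_inv_app.
- by move=> al a phi be b cs gs _ inv _ _ _ _ pw _; apply: extr_inv_star.
- by move=> al al' a phi be be' _ /extr_inv_ext; apply.
Qed.

Lemma extr_inv_sub al a phi be d : extr_inv al a phi be -> be d <> None -> al d = be d.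
Proof.
by case=> _ _ _ off on; case da: (prefix d a); [rewrite on | rewrite off ?da].
Qed.

Lemma chain_step_form al s ga a phi :
  extr_chain al s ga -> (a, phi) \in s -> al a = Some (SForm phi).
Proof.
move=> chain; elim: chain a phi => {al s ga} // al a0 phi0 be s ga /extrP inv _ IH a phi.
rewrite in_cons => /orP[/eqP[-> ->]|as_]; first by case: inv.
have be_a := IH _ _ as_; by rewrite (extr_inv_sub inv) be_a.
Qed.

Lemma chain_uniq_addr al s ga : extr_chain al s ga -> uniq (map fst s).
Proof.
elim=> {al s ga} // al a phi be s ga /extrP inv ch_be IH /=.
rewrite IH andbT; apply/mapP => -[[a' phi'] a's /= aa'].
have be_a : be a = None by case: inv => _ _ _ _ ->; rewrite ?addr_prefix_refl.
by move: (chain_step_form ch_be a's); rewrite -aa' be_a.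
Qed.

(* The node at [c] is erased only by extracting a leaf below [c ++ [:: 2]]. *)
Lemma chain_right_before_left al s ga s1 a phi s2 c r :
  extr_chain al s ga -> s = s1 ++ (a, phi) :: s2 -> a = c ++ 1 :: r -> al c <> None ->
  exists r' phi', (c ++ 2 :: r', phi') \in s1.
Proof.
move=> chain; elim: chain s1 => {al s ga} [al [] //|].
move=> al a0 phi0 be s ga /extrP inv ch_be IH [|x s1] /=.
  by case=> <- _ _ ac alc; case: inv => _ _ path _ _; case: (path c 1 r ac alc).
case=> <- {x} ss ac alc; case: (inv) => leaf below path off _.
case ca0: (prefix c a0).
  move: ca0 => /addr_prefixP[[|k e] a0c].
    have as_ : (a, phi) \in s by rewrite ss mem_cat mem_head orbT.
    have := chain_step_form ch_be as_; rewrite -(extr_inv_sub inv) ?(chain_step_form ch_be as_) //.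
    by move: a0c; rewrite cats0 ac => <-; rewrite below.
  have [k2 _] := path c k e a0c alc; subst k.
  by exists e, phi0; rewrite -a0c mem_head.
have [|r' [phi' in_s1]] := IH s1 ss ac; first by rewrite off ?ca0.
by exists r', phi'; rewrite in_cons in_s1 orbT.
Qed.

Lemma chain_complete al s : extr_chain al s bp_empty ->
  forall d phi, al d = Some (SForm phi) -> (d, phi) \in s.
Proof.
move Eempty: bp_empty => ga ch; elim: ch Eempty => {al s ga} [al <- //|].
move=> al a phi0 be s ga /extrP[leaf _ path off _] _ IH Eempty d phi ald.
case da: (prefix d a); last by rewrite in_cons IH ?orbT // off ?da.
move: da => /addr_prefixP[[|k e] ad].
  by move: leaf; rewrite ad cats0 ald => -[->]; apply: mem_head.
have [|_ [psi]] := path d k e ad; by rewrite ald.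
Qed.

Lemma steps_cons l bs om oms :
  steps (l :: bs) (om :: oms) = steps bs oms ++ [seq (b, om) | b <- l].
Proof. by rewrite /steps /= rev_cons flatten_rcons. Qed.

Lemma mem_steps_block bs oms b phi : size bs = size oms -> (b, phi) \in steps bs oms ->
  exists i, [/\ i < size bs, b \in nth [::] bs i & phi = nth (Atom 0) oms i].
Proof.
elim: bs oms => [|l bs IH] [|om oms] //= [size_bs].
rewrite steps_cons mem_cat => /orP[/(IH _ size_bs)[i [? ? ?]]|/mapP[b' ? [-> ->]]].
  by exists i.+1.
by exists 0.
Qed.

Lemma block_mem_steps bs oms i b : size bs = size oms -> i < size bs ->
  b \in nth [::] bs i -> (b, nth (Atom 0) oms i) \in steps bs oms.
Proof.
elim: bs oms i => [|l bs IH] [|om oms] //= [|i] [size_bs] /= lt_i b_i;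
  rewrite steps_cons mem_cat; first by rewrite map_f ?orbT.
by rewrite IH.
Qed.

Lemma steps_block_unique bs oms i j b : size bs = size oms ->
  uniq (map fst (steps bs oms)) -> i < size bs -> j < size bs ->
  b \in nth [::] bs i -> b \in nth [::] bs j -> i = j.
Proof.
elim: bs oms i j => [|l bs IH] [|om oms] //= + + [size_bs].
rewrite steps_cons map_cat cat_uniq => -[|i] [|j] /and3P[u_bs disj u_l] //= lt_i lt_j b_i b_j.
- case/hasP: disj; exists b; first by apply/mapP; exists (b, om); rewrite ?map_f.
  by apply/mapP; eexists; first apply: block_mem_steps b_j.
- case/hasP: disj; exists b; first by apply/mapP; exists (b, om); rewrite ?map_f.
  by apply/mapP; eexists; first apply: block_mem_steps b_i.
- by congr S; apply: (IH oms).
Qed.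

Lemma steps_split_block bs oms i b : size bs = size oms -> i < size bs ->
  b \in nth [::] bs i ->
  exists s1 s2, steps bs oms = s1 ++ (b, nth (Atom 0) oms i) :: s2 /\
    forall x, x \in s1 -> exists j, [/\ i <= j, j < size bs & x.1 \in nth [::] bs j].
Proof.
elim: bs oms i => [|l bs IH] [|om oms] //= [|i] [size_bs] /= lt_i b_i.
- have [l1 [l2 split_l]] : exists l1 l2, [seq (b, om) | b <- l] = l1 ++ (b, om) :: l2.
    by case/splitPr: (map_f (fun b => (b, om)) b_i) => l1 l2; exists l1, l2.
  exists (steps bs oms ++ l1), l2; split; first by rewrite steps_cons split_l catA.
  move=> [x1 x2]; rewrite mem_cat => /orP[/(mem_steps_block size_bs)[k [? ? _]]|x_l1].
    by exists k.+1.
  exists 0; split=> //=.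
  have : (x1, x2) \in [seq (b, om) | b <- l] by rewrite split_l mem_cat x_l1.
  by case/mapP=> b' ? [->].
- have [s1 [s2 [split_s first_s1]]] := IH oms i size_bs lt_i b_i.
  exists s1, (s2 ++ [seq (b, om) | b <- l]); split; first by rewrite steps_cons split_s -catA.
  by move=> x /first_s1[j [? ? ?]]; exists j.+1.
Qed.

Section Terms.

Variable X : eqType.
Implicit Types (M P Q S : term X) (x y : X).

Lemma subterm_nil M : subterm M [::] = Some M.
Proof. by case: M. Qed.

Lemma subterm_cat M d e : subterm M (d ++ e) = obind (subterm^~ e) (subterm M d).
Proof.
elim: d M => [|k d IH] [x|x P|P Q] //=; first by case: (k == 1).
by case: (k == 1) => //; case: (k == 2).
Qed.

Lemma subterm_rcons M p S k S' :
  subterm M p = Some S -> subterm S [:: k] = Some S' -> subterm M (rcons p k) = Some S'.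
Proof. by move=> MpS SkS'; rewrite -cats1 subterm_cat MpS. Qed.

Lemma subterm_lam_body M p x P :
  subterm M p = Some (Lam x P) -> subterm M (rcons p 1) = Some P.
Proof. by move/subterm_rcons; apply; rewrite /= subterm_nil. Qed.

Lemma subterm_app_fun M p P Q :
  subterm M p = Some (App P Q) -> subterm M (rcons p 1) = Some P.
Proof. by move/subterm_rcons; apply; rewrite /= subterm_nil. Qed.

Lemma subterm_app_arg M p P Q :
  subterm M p = Some (App P Q) -> subterm M (rcons p 2) = Some Q.
Proof. by move/subterm_rcons; apply; rewrite /= subterm_nil. Qed.

Lemma FV_subterm M a S x : subterm M a = Some S ->
  x \in FV S -> (x \in FV M) || (x \in BV M).
Proof.
elim: M a => [y|y P IH|P IHP Q IHQ] [|k a] //=; try by move=> /Some_inj <- ->.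
- case: (k == 1) => // /IH sub /sub; rewrite mem_filter in_cons.
  by case: (x == y); rewrite ?orbT //= andbT.
- rewrite !mem_cat; case: (k == 1); first by move=> /IHP sub /sub /orP[] ->; rewrite ?orbT.
  by case: (k == 2) => // /IHQ sub /sub /orP[] ->; rewrite ?orbT.
Qed.

Lemma BV_subterm M a S x : subterm M a = Some S -> x \in BV S -> x \in BV M.
Proof.
elim: M a => [y|y P IH|P IHP Q IHQ] [|k a] //=; try by move=> /Some_inj <-.
- by case: (k == 1) => // /IH sub /sub; rewrite in_cons => ->; rewrite orbT.
- rewrite !mem_cat; case: (k == 1); first by move=> /IHP sub /sub ->.
  by case: (k == 2) => // /IHQ sub /sub ->; rewrite orbT.
Qed.

Lemma all_BV_subterm M a S : subterm M a = Some S -> all (mem (BV M)) (BV S).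
Proof. by move=> MaS; apply/allP => y; apply: BV_subterm MaS. Qed.

Lemma occ_notin_BV_FV M q x : subterm M q = Some (Var x) -> x \notin BV M -> x \in FV M.
Proof.
by move=> Mqx xB; have := FV_subterm (x := x) Mqx; rewrite /= mem_head (negbTE xB) orbF; apply.
Qed.

Lemma wf_FV_BV M x : wf_term M -> x \in FV M -> x \notin BV M.
Proof. by case/andP => _ /allP H /H. Qed.

Lemma wf_lam x P : wf_term (Lam x P) -> wf_term P.
Proof.
rewrite /wf_term /= => /andP[/andP[xP ->] /allP disj] /=.
apply/allP => y yP; case: (eqVneq y x) => [->//|yx].
by have := disj y; rewrite mem_filter yx yP in_cons negb_or => /(_ isT) /andP[].
Qed.

Lemma wf_appl P Q : wf_term (App P Q) -> wf_term P.
Proof.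
rewrite /wf_term /= cat_uniq => /andP[/and3P[-> _ _] /allP disj] /=.
by apply/allP => y yP; have := disj y; rewrite !mem_cat yP negb_or => /(_ isT) /andP[].
Qed.

Lemma wf_appr P Q : wf_term (App P Q) -> wf_term Q.
Proof.
rewrite /wf_term /= cat_uniq => /andP[/and3P[_ _ ->] /allP disj] /=.
by apply/allP => y yQ; have := disj y; rewrite !mem_cat yQ orbT negb_or => /(_ isT) /andP[].
Qed.

Variables (O : X -> nat) (Om : X -> formula).

Lemma HRM_lam_inv x P : HRM O (Lam x P) ->
  [/\ HRM O P, x \in FV P & forall y, y \in FV P -> O y <= O x].
Proof. by move=> H; inversion H. Qed.

Lemma HRM_app_inv P Q : HRM O (App P Q) ->
  [/\ HRM O P, HRM O Q & forall y, y \in FV P -> exists2 z, z \in FV Q & O y <= O z].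
Proof. by move=> H; inversion H. Qed.

Lemma has_type_tyof S tau : has_type O Om S tau -> tyof Om S = Some tau.
Proof.
elim=> {S tau} //= [x P psi _ -> //|P Q chi psi _ -> _ -> _].
by case: formula_eq_dec.
Qed.

Lemma has_type_HRM S tau : has_type O Om S tau -> HRM O S.
Proof. by case=> // *; constructor. Qed.

Lemma has_type_subterm M tau a S :
  has_type O Om M tau -> subterm M a = Some S -> exists tau', has_type O Om S tau'.
Proof.
elim: a M tau => [|k a IH] M tau tyM /=; first by case: M tyM => [x|x P|P Q] tyM [<-]; exists tau.
case: M tyM => [x|x P|P Q] tyM //=; inversion tyM; subst.
  by case: (k == 1) => //; apply: IH; eassumption.
by case: (k == 1); [|case: (k == 2) => //]; apply: IH; eassumption.
Qed.

Lemma HRM_free_lt_bound M a S w u : injective O -> wf_term M -> HRM O M ->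
  subterm M a = Some S -> w \in FV S -> w \in BV M -> u \in FV S -> u \notin BV M ->
  O u < O w.
Proof.
move=> injO; elim: M a S => [y|y P IH|P IHP Q IHQ] [|k a] S wfM hrmM //=;
  try by move=> /Some_inj <- wS wB; move: wfM => /andP[_ /allP /(_ w wS)]; rewrite wB.
- case: ifP => // _ PaS wS; rewrite !in_cons => wB uS /norP[uy uB].
  have [hrmP yP le_y] := HRM_lam_inv hrmM.
  case/orP: wB => [/eqP wy|wB]; last exact: (IH a S (wf_lam wfM) hrmP PaS wS wB uS uB).
  subst w; have := FV_subterm (x := u) PaS uS; rewrite (negbTE uB) orbF => /le_y.
  by rewrite leq_eqVlt => /orP[/eqP /injO uy'|//]; rewrite uy' eqxx in uy.
- have [hrmP hrmQ _] := HRM_app_inv hrmM.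
  move: (wfM) => /andP[_ /allP disj].
  rewrite !mem_cat => + + + + /norP[uP uQ].
  case: ifP => _ => [MaS wS wB uS|].
    have wBP : w \in BV P.
      case/orP: (FV_subterm (x := w) MaS wS) => // wF.
      by have := disj w; rewrite mem_cat wF mem_cat wB => /(_ isT).
    exact: IHP a S (wf_appl wfM) hrmP MaS wS wBP uS uP.
  case: ifP => // _ MaS wS wB uS.
  have wBQ : w \in BV Q.
    case/orP: (FV_subterm (x := w) MaS wS) => // wF.
    by have := disj w; rewrite mem_cat wF orbT mem_cat wB => /(_ isT).
  exact: IHQ a S (wf_appr wfM) hrmQ MaS wS wBQ uS uQ.
Qed.

Lemma bp_of_term_form M d phi : bp_of_term Om M d = Some (SForm phi) ->
  exists x, [/\ subterm M d = Some (Var x), x \in FV M & phi = Om x].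
Proof.
rewrite /bp_of_term; case: (subterm M d) => // S; case: ifP => // FVS.
case: S FVS => [x|x P|P Q] // FVS; last by case: (tyof Om (App P Q)).
by move: FVS => /= /andP[xM _] [<-]; exists x.
Qed.

Lemma bp_of_term_var M d x : subterm M d = Some (Var x) -> x \in FV M ->
  bp_of_term Om M d = Some (SForm (Om x)).
Proof. by move=> Mdx xM; rewrite /bp_of_term Mdx /= xM. Qed.

End Terms.

Fixpoint relabel (X : eqType) (sg : X -> X) (f : addr -> X) (bvm : seq X)
   (p : addr) (S : term X) : term X :=
  match S with
  | Var x => if x \in bvm then Var (sg x) else Var (f p)
  | Lam x P => Lam (sg x) (relabel sg f bvm (rcons p 1) P)
  | App P Q => App (relabel sg f bvm (rcons p 1) P) (relabel sg f bvm (rcons p 2) Q)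
  end.

Section Relabel.

Variables (X : eqType) (sg : X -> X) (f : addr -> X) (bvm : seq X).
Implicit Types (P Q S : term X) (x y : X).

Lemma subterm_relabel S p q :
  subterm (relabel sg f bvm p S) q = omap (relabel sg f bvm (p ++ q)) (subterm S q).
Proof.
elim: S p q => [x|x P IH|P IHP Q IHQ] p [|k q] /=; rewrite ?cats0 //;
  try by case: (x \in bvm).
- by case: eqP => // ->; rewrite IH cat_rcons.
- case: eqP => [->|_]; first by rewrite IHP cat_rcons.
  by case: eqP => // ->; rewrite IHQ cat_rcons.
Qed.

Lemma BV_relabel S p : BV (relabel sg f bvm p S) = map sg (BV S).
Proof.
elim: S p => [x|x P IH|P IHP Q IHQ] p /=; first by case: (x \in bvm).
  by rewrite IH.
by rewrite IHP IHQ map_cat.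
Qed.

Lemma FV_relabel_bound S p w : {in bvm &, injective sg} -> all (mem bvm) (BV S) ->
  w \in FV S -> w \in bvm -> sg w \in FV (relabel sg f bvm p S).
Proof.
move=> inj_sg; elim: S p => [x|x P IH|P IHP Q IHQ] p /=.
- by move=> _; rewrite in_cons orbF => /eqP -> ->; rewrite mem_head.
- move=> /andP[xb Pb]; rewrite !mem_filter => /andP[wx wP] wb.
  by rewrite IH // andbT; apply: contra wx => /eqP /inj_sg ->.
- rewrite all_cat !mem_cat => /andP[Pb Qb] /orP[wP|wQ] wb; first by rewrite IHP.
  by rewrite IHQ ?orbT.
Qed.

Lemma FV_relabelP S p z : z \in FV (relabel sg f bvm p S) ->
  (exists w, [/\ w \in FV S, w \in bvm & z = sg w]) \/
  (exists q x, [/\ subterm S q = Some (Var x), x \notin bvm & z = f (p ++ q)]).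
Proof.
elim: S p => [x|x P IH|P IHP Q IHQ] p /=.
- case: ifP => xb; rewrite in_cons orbF => /eqP ->; first by left; exists x; rewrite mem_head.
  by right; exists [::], x; rewrite cats0 xb.
- rewrite mem_filter => /andP[zx /IH[[w [wP wb zw]]|[q [y [Pq yb ->]]]]].
    left; exists w; rewrite mem_filter wP andbT; split=> //.
    by apply: contra zx => /eqP wx; rewrite zw wx.
  by right; exists (1 :: q), y; rewrite /= Pq yb cat_rcons.
- rewrite mem_cat => /orP[/IHP|/IHQ] [[w [wS wb ->]]|[q [y [Sq yb ->]]]].
  + by left; exists w; rewrite mem_cat wS.
  + by right; exists (1 :: q), y; rewrite /= Sq yb cat_rcons.
  + by left; exists w; rewrite mem_cat wS orbT.
  + by right; exists (2 :: q), y; rewrite /= Sq yb cat_rcons.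
Qed.

Lemma FV_relabel_free S p q x : (forall y b, y \in bvm -> sg y != f b) ->
  all (mem bvm) (BV S) -> subterm S q = Some (Var x) -> x \notin bvm ->
  f (p ++ q) \in FV (relabel sg f bvm p S).
Proof.
move=> sg_f; elim: S p q => [y|y P IH|P IHP Q IHQ] p [|k q] //=.
- by move=> _ [->] /negbTE ->; rewrite cats0 mem_head.
- move=> /andP[yb Pb]; case: ifP => // /eqP -> Pq xb.
  by rewrite mem_filter -cat_rcons IH // andbT eq_sym sg_f.
- rewrite all_cat => /andP[Pb Qb]; case: ifP => [/eqP -> Pq xb|_].
    by rewrite mem_cat -cat_rcons IHP.
  by case: ifP => // /eqP -> Qq xb; rewrite mem_cat -cat_rcons IHQ ?orbT.
Qed.

Lemma tyof_relabel (Om : X -> formula) S p :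
  (forall x, x \in bvm -> Om (sg x) = Om x) -> all (mem bvm) (BV S) ->
  (forall q x, subterm S q = Some (Var x) -> x \notin bvm -> Om (f (p ++ q)) = Om x) ->
  tyof Om (relabel sg f bvm p S) = tyof Om S.
Proof.
move=> sg_Om; elim: S p => [x|x P IH|P IHP Q IHQ] p /=.
- move=> _ f_Om; case: ifP => xb /=; first by rewrite sg_Om.
  by rewrite -(f_Om [::] x) ?cats0 ?xb.
- move=> /andP[xb Pb] f_Om; rewrite sg_Om // IH // => q y Pq yb.
  by rewrite cat_rcons; apply: (f_Om (1 :: q)).
- rewrite all_cat => /andP[Pb Qb] f_Om; rewrite IHP ?IHQ // => q y Sq yb; rewrite cat_rcons.
  + exact: (f_Om (2 :: q)).
  + exact: (f_Om (1 :: q)).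
Qed.

End Relabel.

Section RelabelTyping.

Variables (X : eqType) (O : X -> nat) (Om : X -> formula) (M : term X).
Variables (sg : X -> X) (f : addr -> X) (base : nat).
Hypotheses (injO : injective O) (wfM : wf_term M) (hrmM : HRM O M).
Hypothesis sg_above : forall x, x \in BV M -> base < O (sg x).
Hypothesis f_below : forall b, O (f b) <= base.
Hypothesis sg_mono : {in BV M &, forall x z, O x < O z -> O (sg x) < O (sg z)}.
Hypothesis f_app_order : forall c P Q, subterm M c = Some (App P Q) ->
  all (fun v => v \notin BV M) (FV (App P Q)) ->
  forall r x, subterm P r = Some (Var x) -> x \notin BV M ->
  exists r' u, [/\ subterm Q r' = Some (Var u), u \notin BV M &
                   O (f (c ++ 1 :: r)) <= O (f (c ++ 2 :: r'))].

Local Notation relabelM := (relabel sg f (BV M)).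

Lemma sg_inj : {in BV M &, injective sg}.
Proof.
move=> x z xb zb sgxz; apply: injO; apply/eqP; case: ltngtP => // lt_xz.
- by have := sg_mono xb zb lt_xz; rewrite sgxz ltnn.
- by have := sg_mono zb xb lt_xz; rewrite sgxz ltnn.
Qed.

Lemma sg_homo : {in BV M &, forall x z, O x <= O z -> O (sg x) <= O (sg z)}.
Proof.
move=> x z xb zb; rewrite leq_eqVlt => /orP[/eqP /injO -> //|lt_xz].
exact/ltnW/sg_mono.
Qed.

Lemma f_lt_sg b x : x \in BV M -> O (f b) < O (sg x).
Proof. by move/sg_above; apply: leq_ltn_trans. Qed.

Lemma sg_neq_f x b : x \in BV M -> sg x != f b.
Proof. by move=> xb; apply: contraTneq (f_lt_sg b xb) => ->; rewrite ltnn. Qed.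

Lemma relabel_HRM_lam p x P : subterm M p = Some (Lam x P) -> HRM O (Lam x P) ->
  forall y, y \in FV (relabelM (rcons p 1) P) -> O y <= O (sg x).
Proof.
move=> MpS hrmS; have [_ _ le_x] := HRM_lam_inv hrmS.
have /andP[xb _] := all_BV_subterm MpS.
move=> y /FV_relabelP[[w [wP wb ->]]|[q [z [_ _ ->]]]]; last exact/ltnW/f_lt_sg.
exact/sg_homo/le_x.
Qed.

Lemma relabel_HRM_app p P Q : subterm M p = Some (App P Q) -> HRM O (App P Q) ->
  forall y, y \in FV (relabelM (rcons p 1) P) ->
  exists2 z, z \in FV (relabelM (rcons p 2) Q) & O y <= O z.
Proof.
move=> MpS hrmS; have [_ _ cover] := HRM_app_inv hrmS.
have /andP[Pb Qb] : all (mem (BV M)) (BV P) && all (mem (BV M)) (BV Q).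
  by rewrite -all_cat; apply: all_BV_subterm MpS.
have free_lt_bound w u : w \in FV P -> w \in BV M -> u \in FV Q -> u \notin BV M -> O u < O w.
  move=> wP wb uQ ub; apply: (HRM_free_lt_bound injO wfM hrmM MpS) => //=.
  - by rewrite mem_cat wP.
  - by rewrite mem_cat uQ orbT.
move=> y /FV_relabelP[[w [wP wb ->]]|[q [z [Pq zb ->]]]].
  have [u uQ le_wu] := cover w wP; case ub: (u \in BV M).
    by exists (sg u); [apply: FV_relabel_bound; first apply: sg_inj | apply: sg_homo].
  by have := free_lt_bound w u wP wb uQ (negbT ub); rewrite ltnNge le_wu.
have [/hasP[w wQ wb]|] := boolP (has (mem (BV M)) (FV Q)).
  by exists (sg w); [apply: FV_relabel_bound; first apply: sg_inj | exact/ltnW/f_lt_sg].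
move=> /hasPn Qfree; have Pfree : all (fun v => v \notin BV M) (FV P).
  apply/allP => v vP; apply/negP => vb; have [u uQ le_vu] := cover v vP.
  by have := free_lt_bound v u vP vb uQ (Qfree u uQ); rewrite ltnNge le_vu.
have [|r' [u [Qr' ub le_f]]] := f_app_order MpS _ Pq zb.
  by rewrite /= all_cat Pfree; apply/allP.
exists (f (p ++ 2 :: r')); last by rewrite cat_rcons.
by rewrite -cat_rcons; apply: FV_relabel_free Qr' ub => // ? ? /sg_neq_f.
Qed.

Lemma relabel_HRM S p : subterm M p = Some S -> HRM O S -> HRM O (relabelM p S).
Proof.
elim: S p => [x|x P IH|P IHP Q IHQ] p MpS hrmS /=.
- by case: ifP; constructor.
- have [hrmP xP _] := HRM_lam_inv hrmS.
  have /andP[xb Pb] := all_BV_subterm MpS.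
  constructor; [exact: IH (subterm_lam_body MpS) hrmP | | exact: relabel_HRM_lam].
  exact: FV_relabel_bound sg_inj _ _ _.
- have [hrmP hrmQ _] := HRM_app_inv hrmS.
  constructor; [exact: IHP (subterm_app_fun MpS) hrmP | exact: IHQ (subterm_app_arg MpS) hrmQ |].
  exact: relabel_HRM_app.
Qed.

Hypothesis sg_Om : forall x, x \in BV M -> Om (sg x) = Om x.
Hypothesis f_Om : forall q x, subterm M q = Some (Var x) -> x \notin BV M -> Om (f q) = Om x.

Lemma relabel_has_type S tau p : has_type O Om S tau -> subterm M p = Some S ->
  has_type O Om (relabelM p S) tau.
Proof.
move=> tyS; elim: tyS p => {S tau} [x|x P psi _ IH hrmS|P Q chi psi _ IHP _ IHQ hrmS] p MpS /=.
- by case: ifP => xb; [rewrite -sg_Om // | rewrite -(f_Om MpS) ?xb]; constructor.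
- have /andP[xb _] := all_BV_subterm MpS.
  rewrite -sg_Om //; constructor; first exact: IH (subterm_lam_body MpS).
  exact: relabel_HRM MpS hrmS.
- apply: ty_app; [exact: IHP (subterm_app_fun MpS) | exact: IHQ (subterm_app_arg MpS) |].
  exact: relabel_HRM MpS hrmS.
Qed.

End RelabelTyping.

Section FreshVariables.

Variables (X : eqType) (O : X -> nat) (Om : X -> formula).
Hypothesis injO : injective O.
Hypothesis Om_fresh : forall (phi : formula) (s : seq X), exists x, Om x = phi /\ x \notin s.

Lemma exists_vars_of_type phi n :
  exists s : seq X, [/\ size s = n, uniq s & {in s, forall x, Om x = phi}].
Proof.
elim: n => [|n [s [size_s uniq_s s_phi]]]; first by exists [::].
have [x [x_phi xs]] := Om_fresh phi s.
exists (x :: s); split; rewrite /= ?size_s ?xs //.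
by move=> y; rewrite in_cons => /orP[/eqP ->|/s_phi].
Qed.

Lemma exists_var_above phi K : exists x, Om x = phi /\ K < O x.
Proof.
have [s [size_s uniq_s s_phi]] := exists_vars_of_type phi K.+2.
have [/hasP[x xs lt_Kx]|/hasPn small] := boolP (has (fun x => K < O x) s).
  by exists x; rewrite s_phi.
have : size (map O s) <= size (iota 0 K.+1).
  apply: uniq_leq_size; first by rewrite map_inj_uniq.
  by move=> _ /mapP[x xs ->]; rewrite mem_iota /= ltnS leqNgt small.
by rewrite size_map size_iota size_s ltnn.
Qed.

Let leO := fun x z : X => O x <= O z.

Let leO_trans : transitive leO.
Proof. by move=> y x z; apply: leq_trans. Qed.

Let leO_total : total leO.
Proof. by move=> x z; apply: leq_total. Qed.

Lemma exists_monotone_renaming (l : seq X) base : exists sg : X -> X,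
  (forall x, x \in l -> Om (sg x) = Om x /\ base < O (sg x)) /\
  {in l &, forall x z, O x < O z -> O (sg x) < O (sg z)}.
Proof.
wlog sorted_l : l / sorted leO l.
  move=> sorted_case.
  have [sg [sg_l sg_mono]] := sorted_case (sort leO l) (sort_sorted leO_total l).
  by exists sg; split=> [x xl|x z xl zl]; [apply: sg_l | apply: sg_mono]; rewrite ?mem_sort.
elim/last_ind: l sorted_l => [|l x IH] sorted_lx; first by exists id.
have le_x z : z \in l -> O z <= O x.
  move=> zl; suff: sorted leO [:: z; x] by rewrite /= andbT.
  apply: (subseq_sorted leO_trans) sorted_lx.
  by rewrite -cats1; apply: (cat_subseq (s1 := [:: z])); rewrite sub1seq ?mem_head.
have [sg [sg_l sg_mono]] := IH (subseq_sorted leO_trans (subseq_rcons l x) sorted_lx).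
have [v [v_Om lt_v]] := exists_var_above (Om x) (maxn base (\max_(z <- l) O (sg z))).
have lt_sg_v z : z \in l -> O (sg z) < O v.
  move=> zl; apply: (leq_ltn_trans _ lt_v); apply: leq_trans (leq_maxr base _).
  exact: leq_bigmax_seq.
exists (fun z => if z == x then v else sg z); split=> [z|z w].
  rewrite mem_rcons in_cons; case: eqP => [-> _|_ /= /sg_l //].
  by split=> //; apply: (leq_ltn_trans _ lt_v); apply: leq_maxl.
rewrite !mem_rcons !in_cons; case: eqP => [-> _|_ /= zl]; case: eqP => [->|_] //=.
- by rewrite ltnn.
- by move=> wl; rewrite ltnNge le_x.
- by move=> _ _; apply: lt_sg_v.
- exact: sg_mono.
Qed.

End FreshVariables.

Section Construction.

Variables (X : eqType) (O : X -> nat) (Om : X -> formula).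
Hypothesis injO : injective O.
Variables (M : term X) (tau0 : formula) (bs : seq (seq addr)) (oms : seq formula).
Variables (Y : seq X) (y0 : X).
Hypotheses (wfM : wf_term M) (tyM : has_type O Om M tau0).
Hypotheses (size_bs : size bs = size oms) (bs_nonempty : all (fun l => l != [::]) bs).
Hypothesis chain : extr_chain (bp_of_term Om M) (steps bs oms) bp_empty.
Hypotheses (sorted_Y : sorted (fun x y => O x < O y) Y) (Om_Y : map Om Y = oms).

Variables (sg : X -> X) (base : nat).
Hypothesis Y_below : forall y, y \in y0 :: Y -> O y <= base.
Hypothesis sg_above : forall x, x \in BV M -> base < O (sg x).
Hypothesis sg_mono : {in BV M &, forall x z, O x < O z -> O (sg x) < O (sg z)}.
Hypothesis sg_Om : forall x, x \in BV M -> Om (sg x) = Om x.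

(* [y_i] for [b] in block [i]; the junk value [y0] for [b] in no block. *)
Let f (b : addr) : X := nth y0 Y (find (fun l => b \in l) bs).

Let hrmM : HRM O M := has_type_HRM tyM.

Let size_Y : size Y = size bs.
Proof. by rewrite -(size_map Om) Om_Y size_bs. Qed.

Let ltO_trans : transitive (fun x y => O x < O y).
Proof. by move=> y x z; apply: ltn_trans. Qed.

Let O_Y_homo i j : i <= j -> j < size Y -> O (nth y0 Y i) <= O (nth y0 Y j).
Proof.
rewrite leq_eqVlt => /orP[/eqP -> //|lt_ij lt_j]; apply: ltnW.
by apply: (sorted_ltn_nth ltO_trans y0 sorted_Y) => //; rewrite inE (ltn_trans lt_ij).
Qed.

Let nth_Y_inj i j : i < size Y -> j < size Y -> nth y0 Y i = nth y0 Y j -> i = j.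
Proof.
have uniq_Y : uniq Y by apply: sorted_uniq sorted_Y => [|x]; [apply: ltO_trans | rewrite /= ltnn].
by move=> lt_i lt_j /eqP; rewrite nth_uniq // => /eqP.
Qed.

Let Om_nth_Y i : i < size Y -> Om (nth y0 Y i) = nth (Atom 0) oms i.
Proof. by move=> lt_i; rewrite -Om_Y (nth_map y0). Qed.

Let block_form i b : i < size bs -> b \in nth [::] bs i ->
  bp_of_term Om M b = Some (SForm (nth (Atom 0) oms i)).
Proof. by move=> lt_i b_i; apply: (chain_step_form chain); apply: block_mem_steps. Qed.

Let f_block i b : i < size bs -> b \in nth [::] bs i -> f b = nth y0 Y i.
Proof.
move=> lt_i b_i; have has_b : has (fun l => b \in l) bs.
  by apply/hasP; exists (nth [::] bs i); rewrite ?mem_nth.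
have uniq_steps := chain_uniq_addr chain.
congr nth; apply: (steps_block_unique size_bs uniq_steps) (nth_find [::] has_b) b_i => //.
by rewrite -has_find.
Qed.

Let f_below b : O (f b) <= base.
Proof.
apply: Y_below; rewrite /f; case: (ltnP (find (fun l => b \in l) bs) (size Y)) => [lt_Y|le_Y].
  by rewrite in_cons mem_nth ?orbT.
by rewrite nth_default ?mem_head.
Qed.

Let free_occ_block q x : subterm M q = Some (Var x) -> x \notin BV M ->
  exists i, [/\ i < size bs, q \in nth [::] bs i & Om x = nth (Atom 0) oms i].
Proof.
move=> Mqx xb; have := bp_of_term_var Om Mqx (occ_notin_BV_FV Mqx xb).
by move/(chain_complete chain)/(mem_steps_block size_bs) => [i [? ? ->]]; exists i.
Qed.

Let f_Om q x : subterm M q = Some (Var x) -> x \notin BV M -> Om (f q) = Om x.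
Proof.
move=> Mqx xb; have [i [lt_i q_i ->]] := free_occ_block Mqx xb.
by rewrite (f_block lt_i q_i) Om_nth_Y ?size_Y.
Qed.

Let f_app_order c P Q : subterm M c = Some (App P Q) ->
  all (fun v => v \notin BV M) (FV (App P Q)) ->
  forall r x, subterm P r = Some (Var x) -> x \notin BV M ->
  exists r' u, [/\ subterm Q r' = Some (Var u), u \notin BV M &
                   O (f (c ++ 1 :: r)) <= O (f (c ++ 2 :: r'))].
Proof.
move=> McPQ PQfree r x Prx xb.
have Mx : subterm M (c ++ 1 :: r) = Some (Var x) by rewrite subterm_cat McPQ.
have [i [lt_i x_i _]] := free_occ_block Mx xb.
have c_def : bp_of_term Om M c <> None.
  have [tau tyPQ] := has_type_subterm tyM McPQ.
  rewrite /bp_of_term McPQ; case: ifP => [_|/negP[]]; first by rewrite (has_type_tyof tyPQ).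
  apply/allP => v vPQ; have := FV_subterm (x := v) McPQ vPQ.
  by move/allP: PQfree => /(_ v vPQ) /negbTE ->; rewrite orbF.
have [s1 [s2 [split_s before]]] := steps_split_block size_bs lt_i x_i.
have [r' [phi' right_s1]] := chain_right_before_left chain split_s (erefl _) c_def.
have [j [le_ij lt_j right_j]] := before _ right_s1.
have [u [Mu uM _]] := bp_of_term_form (block_form lt_j right_j).
exists r', u; split; first by move: Mu; rewrite subterm_cat McPQ.
  exact: wf_FV_BV wfM uM.
by rewrite (f_block lt_i x_i) (f_block lt_j right_j); apply: O_Y_homo; rewrite ?size_Y.
Qed.

Let f_free_occ q x : subterm M q = Some (Var x) -> x \notin BV M -> f q \in Y.
Proof.
move=> Mqx xb; have [i [lt_i q_i _]] := free_occ_block Mqx xb.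
by rewrite (f_block lt_i q_i) mem_nth ?size_Y.
Qed.

Let Y_lt_sg y x : y \in Y -> x \in BV M -> O y < O (sg x).
Proof. by move=> yY /sg_above; apply: leq_ltn_trans; rewrite Y_below ?in_cons ?yY ?orbT. Qed.

Let sg_inj_BV : {in BV M &, injective sg} := sg_inj injO sg_mono.

Let N := relabel sg f (BV M) [::] M.

Let subterm_N a : subterm N a = omap (relabel sg f (BV M) a) (subterm M a).
Proof. exact: subterm_relabel. Qed.

Let BV_N : BV N = map sg (BV M).
Proof. exact: BV_relabel. Qed.

Let FV_N_Y z : z \in FV N -> z \in Y.
Proof.
case/FV_relabelP=> [[w [wM wb _]]|[q [x [Mqx xb ->]]]]; last exact: f_free_occ Mqx xb.
by have := wf_FV_BV wfM wM; rewrite wb.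
Qed.

Let Y_FV_N y : y \in Y -> y \in FV N.
Proof.
move=> yY; have lt_i : index y Y < size bs by rewrite -size_Y index_mem.
have [b b_i] : exists b, b \in nth [::] bs (index y Y).
  have /allP /(_ _ (mem_nth [::] lt_i)) := bs_nonempty.
  by case: (nth [::] bs (index y Y)) => [|b l] // _; exists b; rewrite mem_head.
have [x [Mbx xM _]] := bp_of_term_form (block_form lt_i b_i).
have := FV_relabel_free [::] (sg_neq_f sg_above f_below) (all_BV_subterm (subterm_nil M))
  Mbx (wf_FV_BV wfM xM).
by rewrite (f_block lt_i b_i) nth_index.
Qed.

Let wf_N : wf_term N.
Proof.
rewrite /wf_term BV_N (map_inj_in_uniq sg_inj_BV); case/andP: wfM => -> _ /=.
apply/allP => z zN; apply/negP => /mapP[x xb zx].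
by have := Y_lt_sg (FV_N_Y zN) xb; rewrite -zx ltnn.
Qed.

Let stable_relabel a S : subterm M a = Some S ->
  all (mem (FV N)) (FV (relabel sg f (BV M) a S)) = all (mem (FV M)) (FV S).
Proof.
move=> MaS; apply/allP/allP => stable v vS.
  case vb: (v \in BV M); last by have := FV_subterm (x := v) MaS vS; rewrite vb orbF.
  have := stable _ (FV_relabel_bound f a sg_inj_BV (all_BV_subterm MaS) vS vb).
  by move/FV_N_Y/Y_lt_sg => /(_ v vb); rewrite ltnn.
case/FV_relabelP: vS => [[w [wS wb ->]]|[q [x [Sqx xb ->]]]].
  by have := wf_FV_BV wfM (stable _ wS); rewrite wb.
by apply/Y_FV_N/(f_free_occ _ xb); rewrite subterm_cat MaS.
Qed.

Let bp_N : bp_eq (bp_of_term Om N) (bp_of_term Om M).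
Proof.
move=> a; rewrite /bp_of_term subterm_N; case MaS: (subterm M a) => [S|] //=.
rewrite (stable_relabel MaS); case: ifP => // Sstable.
have f_Om_S q x : subterm S q = Some (Var x) -> x \notin BV M -> Om (f (a ++ q)) = Om x.
  by move=> Sqx xb; apply: f_Om xb; rewrite subterm_cat MaS.
have {f_Om_S} tyof_S := tyof_relabel sg_Om (all_BV_subterm MaS) f_Om_S.
case: S MaS Sstable tyof_S => [x|//|P Q] MaS Sstable tyof_S.
  have xb : x \notin BV M by move: Sstable => /= /andP[/(wf_FV_BV wfM)].
  by rewrite /= (negbTE xb) (f_Om MaS xb).
change (omap SApp (tyof Om (relabel sg f (BV M) a (App P Q))) = omap SApp (tyof Om (App P Q))).
by rewrite tyof_S.
Qed.

Let N_occurrences y bi : (y, bi) \in zip Y bs ->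
  forall b, subterm N b = Some (Var y) <-> b \in bi.
Proof.
move=> ybi b; have [i [lt_i -> ->]] := mem_zip_nth y0 [::] size_Y ybi.
rewrite subterm_N; split.
  case MbS: (subterm M b) => [[x|x P|P Q]|] //= [].
  case: ifP => xb [fb]; first by have := Y_lt_sg (mem_nth y0 lt_i) xb; rewrite -fb ltnn.
  have [k [lt_k b_k _]] := free_occ_block MbS (negbT xb).
  by move: fb; rewrite (f_block lt_k b_k) => /nth_Y_inj <- //; rewrite size_Y.
rewrite size_Y in lt_i; move=> b_i; have [x [Mbx xM _]] := bp_of_term_form (block_form lt_i b_i).
by rewrite Mbx /= (negbTE (wf_FV_BV wfM xM)) (f_block lt_i b_i).
Qed.

Lemma relabelling_exists : exists N : term X,
  wf_term N /\
  (forall a, subterm N a = None <-> subterm M a = None) /\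
  bp_eq (bp_of_term Om N) (bp_of_term Om M) /\
  (forall tau, has_type O Om M tau -> has_type O Om N tau) /\
  free_seq O N Y /\
  (forall y bi, (y, bi) \in zip Y bs -> forall b, subterm N b = Some (Var y) <-> b \in bi).
Proof.
exists N; split; [exact: wf_N | split; [|split; [exact: bp_N | split; [|split]]]].
- by move=> a; rewrite subterm_N; case: (subterm M a).
- move=> tau tyMtau.
  apply: (relabel_has_type injO wfM hrmM sg_above f_below sg_mono f_app_order) => //.
  exact: subterm_nil.
- by split=> // z; apply/idP/idP; [apply: FV_N_Y | apply: Y_FV_N].
- exact: N_occurrences.
Qed.

End Construction.

Theorem lemma2p16 (X : eqType) (O : X -> nat) (Om : X -> formula)
  (HO : injective O)
  (HOm : forall (phi : formula) (s : seq X), exists x, Om x = phi /\ x \notin s)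
  (M : term X) (bs : seq (seq addr)) (oms : seq formula) :
  Lambda_NF O Om M ->
  size bs = size oms ->
  all (fun l => l != [::]) bs ->
  extr_chain (bp_of_term Om M) (steps bs oms) bp_empty ->
  forall Y : seq X,
    sorted (fun x y => O x < O y) Y ->
    map Om Y = oms ->
    exists N : term X,
      wf_term N /\
      (forall a, subterm N a = None <-> subterm M a = None) /\
      bp_eq (bp_of_term Om N) (bp_of_term Om M) /\
      (forall tau, has_type O Om M tau -> has_type O Om N tau) /\
      free_seq O N Y /\
      (forall y bi, (y, bi) \in zip Y bs ->
         forall b : addr, subterm N b = Some (Var y) <-> b \in bi).
Proof.
move=> [wfM [[tau0 tyM] _]] size_bs bs_nonempty chain Y sorted_Y Om_Y.
have [y0 _] := HOm (Atom 0) [::].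
pose base := \max_(y <- y0 :: Y) O y.
have [sg [sg_BV sg_mono]] := exists_monotone_renaming HO HOm (BV M) base.
apply: (relabelling_exists HO wfM tyM size_bs bs_nonempty chain sorted_Y Om_Y
  (y0 := y0) (base := base) (sg := sg)).
- by move=> y y_Y; apply: leq_bigmax_seq.
- by move=> x /sg_BV[].
- exact: sg_mono.
- by move=> x /sg_BV[].
Qed.
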